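(* Let $H$ be a cocommutative pointed Majid algebra over a field $k$ whose quiver $Q$ is connected (equivalently, $H$ is link-indecomposable). Then $Q$ has exactly one vertex (so $Q$ is a multi-loop quiver, all arrows being loops at that vertex) and hence $H$ is connected, i.e. its coradical is $k1_H$.
   Context: A Majid algebra (dual quasi-Hopf algebra) over $k$ is a coalgebra $(H,\Delta,\varepsilon)$ together with coalgebra maps $\mathrm{M}:H\otimes H\to H$ and $\mu:k\to H$, a convolution-invertible reassociator $\Phi:H^{\otimes3}\to k$, a coalgebra antimorphism $\mathcal S$ and functionals $\alpha,\beta$ satisfying the dual quasi-Hopf axioms: $a_1(b_1c_1)\Phi(a_2,b_2,c_2)=\Phi(a_1,b_1,c_1)(a_2b_2)c_2$; $1_Ha=a=a1_H$; $\Phi(a_1,b_1,c_1d_1)\Phi(a_2b_2,c_2,d_2)=\Phi(b_1,c_1,d_1)\Phi(a_1,b_2c_2,d_2)\Phi(a_2,b_3,c_3)$; $\Phi(a,1_H,b)=\varepsilon(a)\varepsilon(b)$; $\mathcal S(a_1)\alpha(a_2)a_3=\alpha(a)1_H$, $a_1\beta(a_2)\mathcal S(a_3)=\beta(a)1_H$; $\Phi(a_1,\mathcal S(a_3),a_5)\beta(a_2)\alpha(a_4)=\Phi^{-1}(\mathcal S(a_1),a_3,\mathcal S(a_5))\alpha(a_2)\beta(a_4)=\varepsilon(a)$. $H$ is pointed if all simple subcoalgebras are one-dimensional, and cocommutative if $\Delta=\Delta^{op}$. The quiver of a pointed coalgebra $C$ has vertex set the group-likes $G(C)$ and $\dim_k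 P_{g,h}(C)/k(g-h)$ arrows from $h$ to $g$, where $P_{g,h}(C)=\{x\in C:\Delta(x)=g\otimes x+x\otimes h\}$. *)

(* Majid algebras (dual quasi-Hopf algebras) over a field k,
   possibly infinite-dimensional, encoded without a tensor-product library:
   an element of H (x) H is a finite list of pairs (sum of simple tensors);
   two such lists are equal as tensors iff every bilinear form takes the same
   value on them (valid over a field).  Sweedler sums are sums over these lists;
   all expressions we form are multilinear in the tensor legs, hence
   independent of the chosen representative. *)
From HB Require Import structures.
From mathcomp Require Import all_boot all_order all_algebra.
From Stdlib Require Import Relations.
Set Implicit Arguments. Unset Strict Implicit. Unset Printing Implicit Defensive.
Import Order.TTheory GRing.Theory Num.Theory.
Local Open Scope ring_scope.

Section Majid.
Context {k : fieldType} {H : lmodType k}.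

Definition lin_form (f : H -> k) := forall c x y, f (c *: x + y) = c * f x + f y.
Definition lin_map (f : H -> H) := forall c x y, f (c *: x + y) = c *: f x + f y.
Definition bilin_form (f : H -> H -> k) :=
  (forall c x y z, f (c *: x + y) z = c * f x z + f y z) /\
  (forall c x y z, f z (c *: x + y) = c * f z x + f z y).
Definition bilin_map (f : H -> H -> H) :=
  (forall c x y z, f (c *: x + y) z = c *: f x z + f y z) /\
  (forall c x y z, f z (c *: x + y) = c *: f z x + f z y).
Definition trilin_form (f : H -> H -> H -> k) :=
  (forall c x y z w, f (c *: x + y) z w = c * f x z w + f y z w) /\
  (forall c x y z w, f z (c *: x + y) w = c * f z x w + f z y w) /\
  (forall c x y z w, f z w (c *: x + y) = c * f z w x + f z w y).

Definition teq2 (s t : seq (H * H)) :=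
  forall f, bilin_form f -> \sum_(p <- s) f p.1 p.2 = \sum_(p <- t) f p.1 p.2.

Variable Delta : H -> seq (H * H).

Definition sw2 {V : nmodType} (a : H) (F : H -> H -> V) : V :=
  \sum_(p <- Delta a) F p.1 p.2.
Definition sw3 {V : nmodType} (a : H) (F : H -> H -> H -> V) : V :=
  \sum_(p <- Delta a) \sum_(q <- Delta p.2) F p.1 q.1 q.2.
Definition sw5 {V : nmodType} (a : H) (F : H -> H -> H -> H -> H -> V) : V :=
  \sum_(p <- Delta a) \sum_(q <- Delta p.2) \sum_(r <- Delta q.2)
    \sum_(s <- Delta r.2) F p.1 q.1 r.1 s.1 s.2.

Record majid_algebra (eps : H -> k) (M : H -> H -> H) (one : H)
    (Phi Phiinv : H -> H -> H -> k) (S : H -> H) (alpha beta : H -> k) : Prop := {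
  Delta_lin : forall f, bilin_form f -> forall c x y,
      sw2 (c *: x + y) f = c * sw2 x f + sw2 y f;
  eps_lin : lin_form eps;
  coassoc : forall f, trilin_form f -> forall a,
      \sum_(p <- Delta a) \sum_(q <- Delta p.1) f q.1 q.2 p.2 = sw3 a f;
  counit_l : forall a, sw2 a (fun x y => eps x *: y) = a;
  counit_r : forall a, sw2 a (fun x y => eps y *: x) = a;
  M_bilin : bilin_map M;
  M_Delta : forall f, bilin_form f -> forall a b,
      sw2 (M a b) f = sw2 a (fun a1 a2 => sw2 b (fun b1 b2 => f (M a1 b1) (M a2 b2)));
  M_eps : forall a b, eps (M a b) = eps a * eps b;
  one_Delta : teq2 (Delta one) [:: (one, one)];
  one_eps : eps one = 1;
  Phi_trilin : trilin_form Phi;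
  Phiinv_trilin : trilin_form Phiinv;
  Phi_inv_r : forall a b c,
      sw2 a (fun a1 a2 => sw2 b (fun b1 b2 => sw2 c (fun c1 c2 =>
        Phi a1 b1 c1 * Phiinv a2 b2 c2))) = eps a * eps b * eps c;
  Phi_inv_l : forall a b c,
      sw2 a (fun a1 a2 => sw2 b (fun b1 b2 => sw2 c (fun c1 c2 =>
        Phiinv a1 b1 c1 * Phi a2 b2 c2))) = eps a * eps b * eps c;
  S_lin : lin_map S;
  S_Delta : forall a, forall f, bilin_form f ->
      sw2 (S a) f = sw2 a (fun a1 a2 => f (S a2) (S a1));
  S_eps : forall a, eps (S a) = eps a;
  alpha_lin : lin_form alpha;
  beta_lin : lin_form beta;
  quasi_assoc : forall a b c,
      sw2 a (fun a1 a2 => sw2 b (fun b1 b2 => sw2 c (fun c1 c2 =>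
        Phi a2 b2 c2 *: M a1 (M b1 c1)))) =
      sw2 a (fun a1 a2 => sw2 b (fun b1 b2 => sw2 c (fun c1 c2 =>
        Phi a1 b1 c1 *: M (M a2 b2) c2)));
  unit_l : forall a, M one a = a;
  unit_r : forall a, M a one = a;
  cocycle : forall a b c d,
      sw2 a (fun a1 a2 => sw2 b (fun b1 b2 => sw2 c (fun c1 c2 => sw2 d (fun d1 d2 =>
        Phi a1 b1 (M c1 d1) * Phi (M a2 b2) c2 d2)))) =
      sw2 a (fun a1 a2 => sw3 b (fun b1 b2 b3 => sw3 c (fun c1 c2 c3 => sw2 d (fun d1 d2 =>
        Phi b1 c1 d1 * Phi a1 (M b2 c2) d2 * Phi a2 b3 c3))));
  Phi_normal : forall a b, Phi a one b = eps a * eps b;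
  antipode_alpha : forall a,
      sw3 a (fun a1 a2 a3 => alpha a2 *: M (S a1) a3) = alpha a *: one;
  antipode_beta : forall a,
      sw3 a (fun a1 a2 a3 => beta a2 *: M a1 (S a3)) = beta a *: one;
  antipode_Phi : forall a,
      sw5 a (fun a1 a2 a3 a4 a5 => Phi a1 (S a3) a5 * beta a2 * alpha a4) = eps a;
  antipode_Phiinv : forall a,
      sw5 a (fun a1 a2 a3 a4 a5 => Phiinv (S a1) a3 (S a5) * alpha a2 * beta a4) = eps a
}.

Definition cocommutative :=
  forall a f, bilin_form f -> sw2 a f = sw2 a (fun x y => f y x).

Definition subspace (C : H -> Prop) :=
  C 0 /\ forall c x y, C x -> C y -> C (c *: x + y).
Definition subcoalgebra (C : H -> Prop) :=
  subspace C /\ forall x, C x ->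
    exists s : seq (H * H), (forall p, p \in s -> C p.1 /\ C p.2) /\ teq2 (Delta x) s.
Definition simple_subcoalgebra (C : H -> Prop) :=
  subcoalgebra C /\ (exists x, C x /\ x <> 0) /\
  forall D : H -> Prop, subcoalgebra D -> (forall x, D x -> C x) ->
    (forall x, D x -> x = 0) \/ (forall x, C x -> D x).
Definition one_dimensional (C : H -> Prop) :=
  exists g, g <> 0 /\ forall x, C x <-> exists c : k, x = c *: g.
Definition pointed := forall C, simple_subcoalgebra C -> one_dimensional C.

Definition coradical (x : H) :=
  exists s : seq H, (forall y, y \in s -> exists C, simple_subcoalgebra C /\ C y) /\
    x = \sum_(y <- s) y.

Definition grouplike (eps : H -> k) (g : H) := teq2 (Delta g) [:: (g, g)] /\ eps g = 1.
Definition skew_prim (g h x : H) := teq2 (Delta x) [:: (g, x); (x, h)].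
(* there is at least one arrow from h to g in the quiver:
   dim P_{g,h} / k(g - h) > 0 *)
Definition has_arrow (eps : H -> k) (g h : H) :=
  grouplike eps g /\ grouplike eps h /\
  exists x, skew_prim g h x /\ ~ (exists c : k, x = c *: (g - h)).
Definition quiver_connected (eps : H -> k) :=
  forall g h, grouplike eps g -> grouplike eps h ->
    clos_refl_sym_trans H (has_arrow eps) g h.

End Majid.

From HB Require Import structures.
From mathcomp Require Import all_boot all_order all_algebra.
From mathcomp Require Import boolp classical_sets ring.
Import GRing.Theory.
Set Implicit Arguments. Unset Strict Implicit. Unset Printing Implicit Defensive.
Local Open Scope ring_scope.

(* Only the coalgebra structure matters.  Since H may be infinite-dimensional,
   the basic tool is that linear forms separate vectors; we obtain it from a
   maximal subspace avoiding a given nonzero vector v (Zorn's lemma), which is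
   a hyperplane complementary to k v.  Then:
   - in a cocommutative coalgebra, testing Delta x = g (x) x + x (x) h against
     phi (x) psi with phi (g - h) = 1 shows x is in k (g - h) when g <> h, so
     every arrow of the quiver is a loop and a connected quiver has one vertex;
   - in a pointed coalgebra every simple subcoalgebra is k g for a group-like g,
     and conversely k g is a simple subcoalgebra for every group-like g. *)

Section LinearForms.
Variables (k : fieldType) (V : lmodType k).

Lemma lin_form0 (phi : V -> k) : lin_form phi -> phi 0 = 0.
Proof.
move=> lphi; have := lphi 1 0 0; rewrite scale1r addr0 mul1r => E.
by apply: (@addrI _ (phi 0)); rewrite addr0 -E.
Qed.

Lemma lin_formD (phi : V -> k) x y : lin_form phi -> phi (x + y) = phi x + phi y.
Proof. by move=> lphi; have := lphi 1 x y; rewrite scale1r mul1r. Qed.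

Lemma lin_formZ (phi : V -> k) c x : lin_form phi -> phi (c *: x) = c * phi x.
Proof. by move=> lphi; have := lphi c x 0; rewrite !addr0 lin_form0 // addr0. Qed.

Lemma lin_formB (phi : V -> k) x y : lin_form phi -> phi (x - y) = phi x - phi y.
Proof. by move=> lphi; rewrite lin_formD // -scaleN1r lin_formZ // mulN1r. Qed.

Lemma lin_form_sum (phi : V -> k) (T : Type) (s : seq T) (F : T -> V) :
  lin_form phi -> phi (\sum_(p <- s) F p) = \sum_(p <- s) phi (F p).
Proof.
move=> lphi; elim: s => [|a s IH]; first by rewrite !big_nil lin_form0.
by rewrite !big_cons lin_formD // IH.
Qed.
End LinearForms.

Section Separation.
Variables (k : fieldType) (V : lmodType k) (v : V).
Hypothesis v_neq0 : v <> 0.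

Definition avoids_v (A : V -> Prop) :=
  (forall c x y, A x -> A y -> A (c *: x + y)) /\ ~ A v.

Lemma maximal_avoiding :
  exists W, avoids_v W /\ forall B, (W `<` B)%classic -> ~ avoids_v B.
Proof.
apply: Zorn_bigcup => F FP Ftot; split.
- move=> c x y [A FA Ax] [B FB By].
  have [AB|BA] := Ftot A B FA FB.
  + by exists B => //; apply: (proj1 (FP B FB)) => //; apply: AB.
  + by exists A => //; apply: (proj1 (FP A FA)) => //; apply: BA.
- by move=> [A FA Av]; apply: (proj2 (FP A FA)).
Qed.

Section Complement.
(* A maximal avoiding set [W] is a hyperplane complementary to the line [k v]. *)
Variable W : V -> Prop.
Hypothesis W_avoids : avoids_v W.
Hypothesis W_maximal : forall B, (W `<` B)%classic -> ~ avoids_v B.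

Let W_lin c x y : W x -> W y -> W (c *: x + y). Proof. exact: (proj1 W_avoids). Qed.
Let W_Z c x : W x -> W (c *: x).
Proof.
move=> Wx; have := W_lin c Wx (W_lin (-1) Wx Wx).
by rewrite scaleN1r addNr addr0.
Qed.

Lemma hyperplane0 : W 0.
Proof.
apply: contrapT => nW0; apply: (W_maximal (B := fun x => x = 0)).
- split=> [x Wx|]; first by case: nW0; have := W_lin (-1) Wx Wx; rewrite scaleN1r addNr.
  by move/(_ 0 erefl).
- by split=> [c x y -> ->|]; [rewrite scaler0 addr0 | exact: v_neq0].
Qed.

Lemma hyperplane_decomp x : exists a c, W a /\ x = a + c *: v.
Proof.
have [Wx|nWx] := pselect (W x); first by exists x, 0; rewrite scale0r addr0.
pose B y := exists a c, W a /\ y = a + c *: x.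
have Bv : B v.
  apply: contrapT => nBv; apply: (W_maximal (B := B)).
  - split=> [y Wy|]; first by exists y, 0; rewrite scale0r addr0.
    move/(_ x) => BW; apply: nWx; apply: BW.
    by exists 0, 1; rewrite scale1r add0r; split=> //; apply: hyperplane0.
  - split=> // c y z [a [d [Wa ->]]] [b [e [Wb ->]]].
    exists (c *: a + b), (c * d + e); split; first exact: W_lin.
    by rewrite scalerDr scalerA addrACA scalerDl.
have [a [c [Wa Ev]]] := Bv.
have c0 : c != 0.
  by apply/eqP=> c0; apply: (proj2 W_avoids); rewrite Ev c0 scale0r addr0.
exists (- c^-1 *: a), c^-1; split; first by apply: W_Z.
by rewrite Ev scalerDr scalerA mulVf // scale1r scaleNr addKr.
Qed.

Lemma line_coord_unique a1 c1 a2 c2 :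
  W a1 -> W a2 -> a1 + c1 *: v = a2 + c2 *: v -> c1 = c2.
Proof.
move=> Wa1 Wa2 E; apply: contrapT => /eqP c12; apply: (proj2 W_avoids).
have Ev : (c1 - c2) *: v = a2 - a1.
  by rewrite scalerBl -[c1 *: v](addKr a1) E addrA addrK addrC.
have -> : v = (c1 - c2)^-1 *: (a2 - a1) by rewrite -Ev scalerA mulVf ?subr_eq0 // scale1r.
by apply: W_Z; rewrite addrC -scaleN1r; apply: W_lin.
Qed.

Definition line_coord (x : V) : k := xget 0 (fun c => exists a, W a /\ x = a + c *: v).

Lemma line_coordE a c : W a -> line_coord (a + c *: v) = c.
Proof.
move=> Wa; pose P c' := exists a', W a' /\ a + c *: v = a' + c' *: v.
have [a' [Wa' E]] : P (line_coord (a + c *: v)) by apply: xgetPex; exists c, a.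
by apply: (line_coord_unique Wa' Wa); rewrite -E.
Qed.

Lemma line_coord_lin : lin_form line_coord.
Proof.
move=> c x y; have [a [d [Wa ->]]] := hyperplane_decomp x; have [b [e [Wb ->]]] := hyperplane_decomp y.
have -> : c *: (a + d *: v) + (b + e *: v) = (c *: a + b) + (c * d + e) *: v.
  by rewrite scalerDr scalerA addrACA scalerDl.
by rewrite !line_coordE //; apply: W_lin.
Qed.

Lemma line_coord_v : line_coord v = 1.
Proof. by rewrite -[v]add0r -[v in _ + v]scale1r line_coordE //; apply: hyperplane0. Qed.
End Complement.
Lemma separating_form : exists phi : V -> k, lin_form phi /\ phi v = 1.
Proof.
have [W [W_avoids W_maximal]] := maximal_avoiding.
by exists (line_coord W); split; [apply: line_coord_lin | apply: line_coord_v].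
Qed.
End Separation.

Section Bilinear.
Variables (k : fieldType) (V : lmodType k).

Lemma lin_form_ext (a b : V) :
  (forall phi : V -> k, lin_form phi -> phi a = phi b) -> a = b.
Proof.
move=> Hab; apply: contrapT => nab.
have nz : a - b <> 0 by move/eqP; rewrite subr_eq0 => /eqP.
have [phi [lphi phi1]] := separating_form nz.
by move: phi1; rewrite lin_formB // Hab // subrr => /eqP; rewrite eq_sym oner_eq0.
Qed.

Lemma bilin_prod (phi psi : V -> k) :
  lin_form phi -> lin_form psi -> bilin_form (fun x y => phi x * psi y).
Proof.
move=> lphi lpsi; split=> c x y z.
- by rewrite lphi mulrDl mulrA.
- by rewrite lpsi mulrDr !mulrA (mulrC (phi z) c).
Qed.

Lemma bilin_flip (f : V -> V -> k) : bilin_form f -> bilin_form (fun x y => f y x).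
Proof. by move=> [fl fr]; split=> *; [rewrite fr | rewrite fl]. Qed.

Lemma bilin_Zl (f : V -> V -> k) c x y : bilin_form f -> f (c *: x) y = c * f x y.
Proof. by move=> [fl _]; apply: (lin_formZ c x (fun c x z => fl c x z y)). Qed.

Lemma bilin_Zr (f : V -> V -> k) c x y : bilin_form f -> f y (c *: x) = c * f y x.
Proof. by move=> /bilin_flip; apply: bilin_Zl. Qed.
End Bilinear.

Section Cocommutative.
Variables (k : fieldType) (V : lmodType k) (Delta : V -> seq (V * V)).
Hypothesis Delta_cocomm : cocommutative Delta.

(* In a cocommutative coalgebra, a (g,h)-skew-primitive with g <> h is a
   multiple of g - h: evaluating cocommutativity on phi (x) psi, where
   phi (g - h) = 1, gives psi x = phi x * psi (g - h) for every form psi. *)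
Lemma cocomm_skew_prim_trivial g h x :
  g <> h -> skew_prim Delta g h x -> exists c : k, x = c *: (g - h).
Proof.
move=> gh x_skew; have gh0 : g - h <> 0 by move/eqP; rewrite subr_eq0 => /eqP.
have [phi [lphi phi1]] := separating_form gh0.
exists (phi x); apply: lin_form_ext => psi lpsi.
have f_bilin := bilin_prod lphi lpsi.
have := Delta_cocomm x f_bilin.
rewrite /sw2 (x_skew _ f_bilin) (x_skew _ (bilin_flip f_bilin)) !big_cons !big_nil /= !addr0.
move=> E; rewrite lin_formZ // lin_formB //; rewrite lin_formB // in phi1.
have : (phi g - phi h) * psi x - phi x * (psi g - psi h) =
    (phi g * psi x + phi x * psi h) - (phi x * psi g + phi h * psi x) by ring.
by rewrite E subrr phi1 mul1r => /eqP; rewrite subr_eq0 => /eqP.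
Qed.

Lemma cocomm_arrow_loop (eps : V -> k) g h : has_arrow Delta eps g h -> g = h.
Proof.
move=> [_ [_ [x [x_skew x_nontriv]]]]; apply: contrapT => gh.
exact: x_nontriv (cocomm_skew_prim_trivial gh x_skew).
Qed.

Lemma cocomm_connected_single_vertex (eps : V -> k) g h :
  quiver_connected Delta eps -> grouplike Delta eps g -> grouplike Delta eps h -> g = h.
Proof.
move=> Qconn Gg Gh; elim: (Qconn g h Gg Gh) => [x y /cocomm_arrow_loop //|//|x y _ -> //|].
by move=> x y z _ -> _ ->.
Qed.
End Cocommutative.

Section PointedCoalgebra.
Variables (k : fieldType) (V : lmodType k) (Delta : V -> seq (V * V)) (eps : V -> k).
Hypothesis Delta_lin : forall f, bilin_form f -> forall c x y,
  sw2 Delta (c *: x + y) f = c * sw2 Delta x f + sw2 Delta y f.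
Hypothesis eps_lin : lin_form eps.
Hypothesis counit_l : forall a, sw2 Delta a (fun x y => eps x *: y) = a.

Definition line (g x : V) := exists c : k, x = c *: g.

Lemma line_sum g (s : seq V) : (forall y, y \in s -> line g y) -> line g (\sum_(y <- s) y).
Proof.
elim: s => [|y s IH] s_line; first by exists 0; rewrite big_nil scale0r.
rewrite big_cons; have [a ->] := s_line y (mem_head _ _).
have [b ->] : line g (\sum_(z <- s) z) by apply: IH => z zs; apply: s_line; rewrite inE zs orbT.
by exists (a + b); rewrite scalerDl.
Qed.

Lemma line_scale c g x : c != 0 -> line (c *: g) x <-> line g x.
Proof.
move=> c0; split=> [[a ->]|[a ->]]; first by exists (a * c); rewrite scalerA.
by exists (a / c); rewrite scalerA divfK.
Qed.

Lemma tensor_in_line g (s : seq (V * V)) :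
  (forall p, p \in s -> line g p.1 /\ line g p.2) ->
  exists lam : k, forall f, bilin_form f -> \sum_(p <- s) f p.1 p.2 = lam * f g g.
Proof.
elim: s => [|p s IH] s_line; first by exists 0 => f _; rewrite big_nil mul0r.
have [lam Hlam] : exists lam : k, forall f, bilin_form f ->
    \sum_(q <- s) f q.1 q.2 = lam * f g g.
  by apply: IH => q qs; apply: s_line; rewrite inE qs orbT.
have [[a Ea] [b Eb]] := s_line p (mem_head _ _).
exists (a * b + lam) => f f_bilin.
by rewrite big_cons Hlam // Ea Eb bilin_Zl // bilin_Zr // mulrDl mulrA.
Qed.

Lemma sw2_scale (f : V -> V -> k) c x :
  bilin_form f -> sw2 Delta (c *: x) f = c * sw2 Delta x f.
Proof.
move=> f_bilin; have sw0 : sw2 Delta 0 f = 0.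
  have := Delta_lin f_bilin 1 0 0; rewrite scale1r addr0 mul1r => E.
  by apply: (@addrI _ (sw2 Delta 0 f)); rewrite addr0 -E.
by have := Delta_lin f_bilin c x 0; rewrite addr0 sw0 addr0.
Qed.

Lemma grouplike_neq0 g : grouplike Delta eps g -> g <> 0.
Proof.
move=> [_ eps_g] g0; move: eps_g; rewrite g0 lin_form0 // => /eqP.
by rewrite eq_sym oner_eq0.
Qed.

Lemma grouplike_line_simple g : grouplike Delta eps g -> simple_subcoalgebra Delta (line g).
Proof.
move=> Gg; have line_g : line g g by exists 1; rewrite scale1r.
have line_sub : subspace (line g).
  split=> [|c x y [a ->] [b ->]]; first by exists 0; rewrite scale0r.
  by exists (c * a + b); rewrite scalerDl scalerA.
split; [split=> // x [c ->] | split; first by exists g; split; last exact: grouplike_neq0].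
  exists [:: (c *: g, g)]; split; first by move=> p; rewrite inE => /eqP -> /=; split=> //; exists c.
  move=> f f_bilin; rewrite -/(sw2 Delta (c *: g) f) sw2_scale // /sw2 (proj1 Gg) //.
  by rewrite !big_cons !big_nil !addr0 /= bilin_Zl.
move=> D [[D0 D_lin] _] DC; have [[x [Dx x0]]|D_triv] := pselect (exists x, D x /\ x <> 0).
- right; have [c Ec] := DC x Dx.
  have c0 : c != 0 by apply/eqP=> c0; apply: x0; rewrite Ec c0 scale0r.
  have Dg : D g by have := D_lin c^-1 x 0 Dx D0; rewrite addr0 Ec scalerA mulVf // scale1r.
  by move=> y [a ->]; have := D_lin a g 0 Dg D0; rewrite addr0.
- by left=> x Dx; apply: contrapT => x0; apply: D_triv; exists x.
Qed.

(* In a pointed coalgebra every simple subcoalgebra is the line of a group-like: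
   if C = k g0 then Delta g0 = lam g0 (x) g0, the counit forces lam * eps g0 = 1,
   and lam g0 is group-like. *)
Lemma pointed_simple_grouplike C : pointed Delta -> simple_subcoalgebra Delta C ->
  exists g, grouplike Delta eps g /\ forall x, C x <-> line g x.
Proof.
move=> Hpt C_simple; have [g0 [g0_neq0 C_line]] := Hpt C C_simple.
have [[_ C_coalg] _] := C_simple.
have [s [s_in s_eq]] := C_coalg g0 (proj2 (C_line g0) (ex_intro _ 1 (esym (scale1r g0)))).
have s_line p : p \in s -> line g0 p.1 /\ line g0 p.2.
  by move=> /s_in [/C_line C1 /C_line C2].
have [lam Hlam] := tensor_in_line s_line.
have Delta_g0 f : bilin_form f -> sw2 Delta g0 f = lam * f g0 g0.
  by move=> f_bilin; rewrite /sw2 s_eq // Hlam.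
have lam_eps : lam * eps g0 = 1.
  have [psi [lpsi psi1]] := separating_form g0_neq0.
  have := congr1 psi (counit_l g0); rewrite /sw2 lin_form_sum //.
  under eq_bigr do rewrite lin_formZ //.
  rewrite -/(sw2 Delta g0 (fun x y => eps x * psi y)).
  by rewrite Delta_g0 ?psi1 ?mulr1 => [->|]; last exact: bilin_prod.
have lam0 : lam != 0.
  by apply/eqP=> lam0; move: lam_eps; rewrite lam0 mul0r => /eqP; rewrite eq_sym oner_eq0.
exists (lam *: g0); split; last by move=> x; rewrite line_scale.
split; last by rewrite lin_formZ.
move=> f f_bilin; rewrite -/(sw2 Delta (lam *: g0) f) sw2_scale // Delta_g0 //.
by rewrite big_cons big_nil addr0 /= bilin_Zl // bilin_Zr // mulrA.
Qed.
End PointedCoalgebra.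

Theorem mainTheorem7 (k : fieldType) (H : lmodType k)
    (Delta : H -> seq (H * H)) (eps : H -> k) (M : H -> H -> H) (one : H)
    (Phi Phiinv : H -> H -> H -> k) (S : H -> H) (alpha beta : H -> k) :
  majid_algebra Delta eps M one Phi Phiinv S alpha beta ->
  cocommutative Delta ->
  pointed Delta ->
  quiver_connected Delta eps ->
  (forall g, grouplike Delta eps g -> g = one) /\
  (forall x, coradical Delta x <-> exists c : k, x = c *: one).
Proof.
move=> HM Hcc Hpt Hqc.
have one_gl : grouplike Delta eps one by split; [exact: one_Delta HM | exact: one_eps HM].
have gl_one g : grouplike Delta eps g -> g = one.
  by move=> Gg; apply: (cocomm_connected_single_vertex Hcc Hqc Gg one_gl).
split=> // x; split.
- move=> [s [s_simple ->]]; apply: line_sum => y /s_simple [C [C_simple Cy]].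
  have [g [Gg C_line]] := pointed_simple_grouplike (Delta_lin HM) (eps_lin HM) (counit_l HM) Hpt C_simple.
  by rewrite -(gl_one g Gg); apply/C_line.
- move=> x_line; exists [:: x]; split; last by rewrite big_seq1.
  move=> y; rewrite inE => /eqP ->; exists (line one); split=> //.
  exact: (grouplike_line_simple (Delta_lin HM) (eps_lin HM) one_gl).
Qed.
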